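(* Let $D$ be a small category, $\mathcal F$ a collection of $D$-orbits, and $X$ a (non-relative) $D$-cell complex of type $\mathcal F$. Then $X$ is a $D$-space of type $\mathcal F$.
   Context: A $D$-space is a functor $D\to\mathrm{Top}$; a $D$-orbit is a $D$-space whose colimit is a point; spaces are regarded as constant $D$-spaces. A $D$-cell structure of type $\mathcal F$ on $X$ consists of an ordinal $\lambda$ and $D$-spaces $X_\nu$ ($\nu\le\lambda$) with $X=X_\lambda$, such that for each successor $\mu+1\le\lambda$, $X_{\mu+1}$ is a pushout of $X_\mu\leftarrow S^{n-1}\times O_\mu\to D^n\times O_\mu$ for some $O_\mu\in\mathcal F$ and some $n\ge 0$ depending on $\mu$ ($S^{-1}=\emptyset$), and for limit ordinals $\nu$, $X_\nu=\operatorname{colim}_{\xi<\nu}X_\xi$. It is a (non-relative) $D$-cell complex if $X_0$ is the constant empty $D$-space. For $x\in\operatorname{colim}_D X$, the orbit $O_x$ is the pullback of $X\to\operatorname{colim}_D X$ along $\{x\}\hookrightarrow\operatorname{colim}_D X$; $X$ is of type $\mathcal F$ if $O_x\in\mathcal F$ for every $x\in\operatorname{colim}_D X$ (orbits considered up to isomorphism). *)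

From HB Require Import structures.
From mathcomp Require Import all_boot all_order all_algebra.
From mathcomp Require Import all_classical all_reals.
From mathcomp Require Import topology matrix_topology subtype_topology.
From mathcomp Require Import Rstruct Rstruct_topology.
Import Order.TTheory GRing.Theory Num.Theory.

Set Implicit Arguments.
Unset Strict Implicit.
Unset Printing Implicit Defensive.

Local Open Scope classical_set_scope.
Local Open Scope ring_scope.

Record Cat := {
  Ob :> Type;
  Hom : Ob -> Ob -> Type;
  cid : forall a, Hom a a;
  ccomp : forall a b c, Hom b c -> Hom a b -> Hom a c;
  ccomp_idl : forall a b (f : Hom a b), ccomp (cid b) f = f;
  ccomp_idr : forall a b (f : Hom a b), ccomp f (cid a) = f;
  ccompA : forall a b c d (h : Hom c d) (g : Hom b c) (f : Hom a b),
      ccomp h (ccomp g f) = ccomp (ccomp h g) f }.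
Arguments cid {_} a.
Arguments ccomp {C a b c} _ _ : rename.

Unset Implicit Arguments.
Record DSpace (D : Cat) := {
  dsp :> Ob D -> topologicalType;
  dact : forall a b, Hom a b -> dsp a -> dsp b;
  dact_cont : forall a b (f : Hom a b), continuous (dact a b f);
  dact_id : forall a (x : dsp a), dact a a (cid a) x = x;
  dact_comp : forall a b c (g : Hom b c) (f : Hom a b) (x : dsp a),
      dact a c (ccomp g f) x = dact b c g (dact a b f x) }.
Arguments dact {D} X {a b} f x : rename.
Arguments dsp {D} X a : rename.

Record DMap (D : Cat) (X Y : DSpace D) := {
  dmap :> forall a, X a -> Y a;
  dmap_cont : forall a : Ob D, continuous (dmap a);
  dmap_nat : forall (a b : Ob D) (f : Hom a b) (x : X a),
      dmap b (dact X f x) = dact Y f (dmap a x) }.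
Arguments DMap {D} X Y.
Arguments dmap {D X Y} m a x : rename.
Set Implicit Arguments.

Definition dcommutes (D : Cat) (X Y Z : DSpace D)
  (f : DMap X Y) (g : DMap Y Z) (h : DMap X Z) : Prop :=
  forall a (x : X a), g a (f a x) = h a x.

Definition dmap_eq (D : Cat) (X Y : DSpace D) (f g : DMap X Y) : Prop :=
  forall a (x : X a), f a x = g a x.

Definition diso (D : Cat) (X Y : DSpace D) : Prop :=
  exists (f : DMap X Y) (g : DMap Y X),
    (forall a (x : X a), g a (f a x) = x) /\
    (forall a (y : Y a), f a (g a y) = y).

Definition IsDPushout (D : Cat) (A B C P : DSpace D)
  (f : DMap A B) (g : DMap A C) (i : DMap B P) (j : DMap C P) : Prop :=
  (forall a (x : A a), i a (f a x) = j a (g a x)) /\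
  forall (Q : DSpace D) (u : DMap B Q) (v : DMap C Q),
    (forall a (x : A a), u a (f a x) = v a (g a x)) ->
    exists w : DMap P Q,
      dcommutes i w u /\ dcommutes j w v /\
      forall w' : DMap P Q, dcommutes i w' u -> dcommutes j w' v ->
        dmap_eq w' w.

Definition IsTopColimit (D : Cat) (X : DSpace D) (C : topologicalType)
  (c : forall a, X a -> C) : Prop :=
  (forall a : Ob D, continuous (c a)) /\
  (forall a b (f : Hom a b) (x : X a), c b (dact X f x) = c a x) /\
  forall (Y : topologicalType) (g : forall a, X a -> Y),
    (forall a : Ob D, continuous (g a)) ->
    (forall a b (f : Hom a b) (x : X a), g b (dact X f x) = g a x) ->
    exists h : C -> Y, continuous h /\ (forall a x, h (c a x) = g a x) /\
      forall h' : C -> Y, continuous h' -> (forall a x, h' (c a x) = g a x) ->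
        forall z, h' z = h z.

Definition DOrbit (D : Cat) (O : DSpace D) : Prop :=
  exists (C : topologicalType) (c : forall a, O a -> C),
    IsTopColimit c /\ exists pt : C, forall z : C, z = pt.

(** [P] (with [p : P -> X]) is the pullback of [X -> const (colim X)] along
    [{x} -> colim X], i.e. the orbit [O_x]. The map from P to the constant
    one-point D-space is unique, so the universal property reduces to: *)
Definition IsOrbitAt (D : Cat) (X : DSpace D) (C : topologicalType)
  (c : forall a, X a -> C) (x : C) (P : DSpace D) (p : DMap P X) : Prop :=
  (forall a (y : P a), c a (p a y) = x) /\
  forall (Q : DSpace D) (q : DMap Q X),
    (forall a (y : Q a), c a (q a y) = x) ->
    exists u : DMap Q P, dcommutes u p q /\
      forall u' : DMap Q P, dcommutes u' p q -> dmap_eq u' u.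

Definition DSpace_of_type (D : Cat) (F : DSpace D -> Prop) (X : DSpace D)
  : Prop :=
  forall (C : topologicalType) (c : forall a, X a -> C), IsTopColimit c ->
  forall (x : C) (P : DSpace D) (p : DMap P X), IsOrbitAt c x p ->
    exists O, F O /\ diso P O.

Definition sqnorm (n : nat) (v : 'rV[Rdefinitions.R]_n) : Rdefinitions.R := \sum_(i < n) v ord0 i ^+ 2.
Definition disk_set (n : nat) : set 'rV[Rdefinitions.R]_n := [set v | sqnorm v <= 1].
Definition sphere_set (n : nat) : set 'rV[Rdefinitions.R]_n := [set v | sqnorm v = 1].
(** D^n and S^(n-1) with the subspace topology of R^n (S^(-1) is empty). *)
Definition Disk (n : nat) : topologicalType := set_type (@disk_set n).
Definition Sphere (n : nat) : topologicalType := set_type (@sphere_set n).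

Lemma sphere_in_disk (n : nat) (v : 'rV[Rdefinitions.R]_n) : @sphere_set n v -> @disk_set n v.
Proof. by rewrite /sphere_set /disk_set /= => ->. Qed.

Definition sphere_incl (n : nat) (s : Sphere n) : Disk n :=
  SigSub (mem_set (sphere_in_disk (set_mem (valP s)))).

Lemma sphere_incl_cont (n : nat) : continuous (@sphere_incl n).
Proof.
apply: continuous_comp_initial.
exact: (@initial_continuous _ _ (@set_val _ (@sphere_set n))).
Qed.

Lemma pair_map_cont (T U V : topologicalType) (h : U -> V) :
  continuous h -> continuous (fun p : T * U => (p.1, h p.2)).
Proof.
move=> hc [t o] W /= [[A B]] /= [At Bho] ABW.
exists (A, h @^-1` B); first by split => //; exact: hc.
by case=> y z /= [Ay Bz]; exact: ABW.
Qed.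

Definition prodDSpace (D : Cat) (T : topologicalType) (O : DSpace D)
  : DSpace D.
refine {| dsp := fun a => (T * O a)%type : topologicalType;
          dact := fun a b f p => (p.1, dact O f p.2) |}.
- by move=> a b f; apply: pair_map_cont; exact: dact_cont.
- by move=> a [t o] /=; rewrite dact_id.
- by move=> a b c g f [t o] /=; rewrite dact_comp.
Defined.

Definition cell_incl (D : Cat) (n : nat) (O : DSpace D)
  : DMap (prodDSpace (Sphere n) O) (prodDSpace (Disk n) O).
refine (@Build_DMap D (prodDSpace (Sphere n) O) (prodDSpace (Disk n) O)
  (fun (a : Ob D) (p : (Sphere n * O a)%type) =>
     ((sphere_incl p.1, p.2) : (Disk n * O a)%type)) _ _).
- move=> a [s o] W /= [[A B]] /= [As Bo] ABW.
  exists (@sphere_incl n @^-1` A, B); first by split => //; exact: sphere_incl_cont.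
  by case=> y z /= [Ay Bz]; exact: ABW.
- by [].
Defined.

(** * Ordinals: [lambda + 1 = {nu | nu <= lambda}] is represented by a type
    with a well-founded strict total order having a greatest element. *)
Record OrdinalSeg := {
  oidx :> Type;
  olt : oidx -> oidx -> Prop;
  olt_wf : well_founded olt;
  olt_trans : forall x y z, olt x y -> olt y z -> olt x z;
  olt_irrefl : forall x, ~ olt x x;
  olt_total : forall x y, olt x y \/ x = y \/ olt y x;
  otop : oidx;
  otop_max : forall x, x = otop \/ olt x otop }.

Definition ole (L : OrdinalSeg) (x y : L) : Prop := olt x y \/ x = y.
Definition ois_zero (L : OrdinalSeg) (x : L) : Prop := forall y, ~ olt y x.
Definition ois_succ (L : OrdinalSeg) (m n : L) : Prop :=
  olt m n /\ forall y, ~ (olt m y /\ olt y n).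
Definition ois_limit (L : OrdinalSeg) (n : L) : Prop :=
  ~ ois_zero n /\ forall m, ~ ois_succ m n.

Record DCellComplex (D : Cat) (F : DSpace D -> Prop) := {
  cc_ord : OrdinalSeg;
  cc_sp : cc_ord -> DSpace D;
  cc_map : forall m n : cc_ord, ole m n -> DMap (cc_sp m) (cc_sp n);
  cc_map_id : forall (m : cc_ord) (h : ole m m) a (x : cc_sp m a),
      cc_map h a x = x;
  cc_map_comp : forall (l m n : cc_ord) (h1 : ole l m) (h2 : ole m n)
      (h3 : ole l n), dcommutes (cc_map h1) (cc_map h2) (cc_map h3);
  cc_zero : forall m : cc_ord, ois_zero m -> forall a, cc_sp m a -> False;
  cc_succ : forall (m n : cc_ord) (hs : ois_succ m n) (h : ole m n),
      exists (O : DSpace D) (k : nat)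
        (phi : DMap (prodDSpace (Sphere k) O) (cc_sp m))
        (j : DMap (prodDSpace (Disk k) O) (cc_sp n)),
        F O /\ IsDPushout phi (cell_incl k O) (cc_map h) j;
  cc_limit : forall (n : cc_ord), ois_limit n ->
      forall (Y : DSpace D) (g : forall m : cc_ord, olt m n -> DMap (cc_sp m) Y),
        (forall (m m' : cc_ord) (hm : olt m n) (hm' : olt m' n)
           (h : ole m m'), dcommutes (cc_map h) (g m' hm') (g m hm)) ->
        exists w : DMap (cc_sp n) Y,
          (forall (m : cc_ord) (hm : olt m n) (h : ole m n),
              dcommutes (cc_map h) w (g m hm)) /\
          forall w' : DMap (cc_sp n) Y,
            (forall (m : cc_ord) (hm : olt m n) (h : ole m n),
                dcommutes (cc_map h) w' (g m hm)) -> dmap_eq w' w }.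

Definition cc_space (D : Cat) (F : DSpace D -> Prop) (X : DCellComplex F)
  : DSpace D := @cc_sp D F X (otop (cc_ord X)).

(* Every point of a cell complex lies in the interior of a cell D^k x O with
   O in F, so a point x of colim X is the image of some (v0, o0) in such a
   cell.  As colim O is a point, the whole copy {v0} x O lies over x.
   Conversely, a D-map G from X to (R x R^k x O) with an extra point adjoined
   is built by transfinite recursion: G sends (v, o) in the open cell to
   (1, v, o), vanishes (takes the extra value) on earlier stages, and on every
   later cell extends its boundary values radially, scaling the first
   coordinate by |v| < 1.  The first two coordinates of G are D-invariant, so
   they factor through colim X; hence the fibre over x is exactly {v0} x O,
   and G restricted to it is a continuous inverse of o |-> (v0, o). *)

From HB Require Import structures.
From mathcomp Require Import all_boot all_order all_algebra all_classical.
From mathcomp Require Import topology normedtype realfun.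
From mathcomp Require Import Rstruct Rstruct_topology.
Import Order.TTheory GRing.Theory Num.Theory.
Import numFieldNormedType.Exports.

Set Implicit Arguments.
Unset Strict Implicit.
Unset Printing Implicit Defensive.

Local Open Scope classical_set_scope.
Local Open Scope ring_scope.
Local Notation R := Rdefinitions.R.

Arguments dact_id {D} X {a} x : rename.
Arguments dact_comp {D} X {a b c} g f x : rename.
Arguments dact_cont {D} X {a b} f : rename.
Arguments dmap_cont {D X Y} m a : rename.
Arguments dmap_nat {D X Y} m {a b} f x : rename.

Section Indiscrete.
Variable T : Type.

Definition indiscrete : Type := T.
HB.instance Definition _ := gen_eqMixin indiscrete.
HB.instance Definition _ := gen_choiceMixin indiscrete.

Definition indiscrete_open : set_system indiscrete := [set setT; set0].

Lemma indiscrete_openT : indiscrete_open setT. Proof. by left. Qed.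

Lemma indiscrete_openI : setI_closed indiscrete_open.
Proof.
by move=> A B [|] -> [|] ->; rewrite ?setIT ?setTI ?set0I ?setI0; [left|right..].
Qed.

Lemma indiscrete_open_bigU (I : Type) (f : I -> set indiscrete) :
  (forall i, indiscrete_open (f i)) -> indiscrete_open (\bigcup_i f i).
Proof.
move=> fo; have [[i fiT]|nT] := pselect (exists i, f i = setT).
  by left; apply/seteqP; split => // x _; exists i; rewrite ?fiT.
right; apply/seteqP; split => // x [i _]; have [fiT|->] := fo i => //.
by exfalso; apply: nT; exists i.
Qed.

HB.instance Definition _ := isOpenTopological.Build indiscrete
  indiscrete_openT indiscrete_openI indiscrete_open_bigU.

Lemma indiscrete_continuous (S : topologicalType) (f : S -> indiscrete) :
  continuous f.
Proof.
by apply/continuousP => A [|] ->; rewrite ?preimage_setT ?preimage_set0;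
  [exact: openT | exact: open0].
Qed.

End Indiscrete.

(* [focal Z] adjoins to [Z] a point [None] whose only neighbourhood is the
   whole space; a map into [focal Z] is thus automatically continuous at every
   point sent to [None]. *)
Section Focal.
Variable Z : topologicalType.

Definition focal : Type := option Z.
HB.instance Definition _ := Choice.on focal.

Definition focal_open : set_system focal :=
  fun A => A = setT \/ (~ A None /\ open [set z | A (Some z)]).

Lemma focal_openT : focal_open setT. Proof. by left. Qed.

Lemma focal_openI : setI_closed focal_open.
Proof.
move=> A B [->|[nA oA]] [->|[nB oB]]; rewrite ?setIT ?setTI; try by [left|right].
by right; split; [case | exact: openI].
Qed.

Lemma focal_open_bigU (I : Type) (f : I -> set focal) :
  (forall i, focal_open (f i)) -> focal_open (\bigcup_i f i).
Proof.
move=> fo; have [[i fiT]|nT] := pselect (exists i, f i = setT).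
  by left; apply/seteqP; split => // x _; exists i; rewrite ?fiT.
have fo' i : ~ f i None /\ open [set z | f i (Some z)].
  by have [fiT|//] := fo i; exfalso; apply: nT; exists i.
right; split; first by case=> i _; apply: (fo' i).1.
have -> : [set z | (\bigcup_i f i) (Some z)] = \bigcup_i [set z | f i (Some z)].
  by apply/seteqP; split => z [i _ ?]; exists i.
by apply: bigcup_open => i _; exact: (fo' i).2.
Qed.

HB.instance Definition _ := isOpenTopological.Build focal
  focal_openT focal_openI focal_open_bigU.

Lemma focal_openE (A : set focal) : open A = focal_open A.
Proof. by []. Qed.

Definition focal_lift (V : set Z) : set focal :=
  [set y | exists2 z, y = Some z & V z].

Lemma focal_lift_open (V : set Z) : open V -> open (focal_lift V).
Proof.
move=> oV; rewrite focal_openE; right; split; first by case.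
by congr open: oV; apply/seteqP; split => z /=; [exists z | case=> ? [<-]].
Qed.

Lemma focal_nbhs_None (A : set focal) : nbhs (None : focal) A -> A = setT.
Proof.
rewrite nbhsE => -[B [oB BN] BA]; have [BT|[//]] := oB.
by apply/seteqP; split => // y _; apply: BA; rewrite BT.
Qed.

Lemma continuous_into_focal (S : topologicalType) (f : S -> focal) :
  (forall V, open V -> open (f @^-1` focal_lift V)) -> continuous f.
Proof.
move=> fV; apply/continuousP => A [->|[nA oA]]; first exact: openT.
congr open: (fV _ oA); apply/seteqP; split => s /=; first by case=> z fz Az; rewrite fz.
by case: (f s) => [z|] // ?; exists z.
Qed.

Lemma focal_Some_continuous_inv (S : topologicalType) (g : S -> Z) :
  continuous (fun s => Some (g s) : focal) -> continuous g.
Proof.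
move=> gc; apply/continuousP => V oV.
have /continuousP /(_ _ (focal_lift_open oV)) := gc.
by congr open; apply/seteqP; split => s /=; [case=> ? [<-] | exists (g s)].
Qed.

End Focal.

Lemma omap_focal_continuous (Z1 Z2 : topologicalType) (g : Z1 -> Z2) :
  continuous g -> continuous (omap g : focal Z1 -> focal Z2).
Proof.
move=> gc; apply: continuous_into_focal => V oV; rewrite focal_openE; right.
split; first by case=> ? [].
have -> : [set z | (omap g @^-1` focal_lift V) (Some z)] = g @^-1` V.
  by apply/seteqP; split => z /=; [case=> _ [<-] | exists (g z)].
by move/continuousP: gc; apply.
Qed.

Section DSpaceConstructions.
Variable D : Cat.

Definition dcomp (X Y Z : DSpace D) (f : DMap X Y) (g : DMap Y Z) : DMap X Z.
Proof.
refine (@Build_DMap D X Z (fun a x => g a (f a x)) _ _).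
- by move=> a x; apply: continuous_comp; [exact: dmap_cont | exact: dmap_cont].
- by move=> a b h x; rewrite !dmap_nat.
Defined.

Definition did (X : DSpace D) : DMap X X :=
  @Build_DMap D X X (fun a x => x) (fun a x => cvg_id) (fun a b f x => erefl).

(* Any natural family of maps into an indiscrete D-space is a D-map, so the
   universal properties below can be tested against sub-D-spaces spanned by
   arbitrary invariant sets; this is how joint surjectivity is obtained. *)
Section IndiscreteDSpace.
Variables (T : Ob D -> Type) (act : forall a b, Hom a b -> T a -> T b).
Hypothesis act_id : forall a x, act (cid a) x = x.
Hypothesis act_comp : forall a b c (g : Hom b c) (f : Hom a b) x,
  act (ccomp g f) x = act g (act f x).

Definition indiscrete_dspace : DSpace D :=
  @Build_DSpace D (fun a => indiscrete (T a) : topologicalType) act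
    (fun a b f => @indiscrete_continuous _ _ _) act_id act_comp.

Definition indiscrete_dmap (X : DSpace D) (m : forall a, X a -> T a)
    (mN : forall a b (f : Hom a b) x, m b (dact X f x) = act f (m a x)) :
    DMap X indiscrete_dspace :=
  @Build_DMap D X indiscrete_dspace m (fun a => @indiscrete_continuous _ _ _) mN.

End IndiscreteDSpace.

Definition coarse (X : DSpace D) : DSpace D :=
  @indiscrete_dspace (fun a => X a) (fun a b f => dact X f)
    (fun a => dact_id X) (fun a b c => dact_comp X).

Definition coarse_dmap (X Y : DSpace D) (m : forall a, X a -> Y a)
    (mN : forall a b (f : Hom a b) x, m b (dact X f x) = dact Y f (m a x)) :
    DMap X (coarse Y) :=
  @indiscrete_dmap _ _ _ _ X m mN.

Definition coarse_id (X : DSpace D) : DMap X (coarse X) :=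
  @coarse_dmap X X (fun a x => x) (fun a b f x => erefl).

Section SubDSpace.
Variables (X : DSpace D) (S : forall a, X a -> Prop).
Hypothesis S_act : forall a b (f : Hom a b) x, S x -> S (dact X f x).

Definition sub_act a b (f : Hom a b) (p : {x : X a | S x}) : {x : X b | S x} :=
  exist _ (dact X f (proj1_sig p)) (S_act f (proj2_sig p)).

Lemma sub_act_id a p : sub_act (cid a) p = p.
Proof. by case: p => x Sx; apply: eq_exist; rewrite /= dact_id. Qed.

Lemma sub_act_comp a b c (g : Hom b c) (f : Hom a b) p :
  sub_act (ccomp g f) p = sub_act g (sub_act f p).
Proof. by case: p => x Sx; apply: eq_exist; rewrite /= dact_comp. Qed.

Definition sub_dspace : DSpace D := indiscrete_dspace sub_act_id sub_act_comp.

Definition sub_val : DMap sub_dspace (coarse X) :=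
  @coarse_dmap sub_dspace X (fun a p => proj1_sig p) (fun a b f p => erefl).

Definition corestrict (A : DSpace D) (m : DMap A X) (mS : forall a x, S (m a x)) :
    DMap A sub_dspace :=
  @indiscrete_dmap _ _ sub_act_id sub_act_comp A (fun a x => exist _ _ (mS a x))
    (fun a b f x => eq_exist _ _ (dmap_nat m f x)).

End SubDSpace.

Lemma dpushout_ext (A B C P Q : DSpace D) (f : DMap A B) (g : DMap A C)
    (i : DMap B P) (j : DMap C P) (w w' : DMap P Q) :
  IsDPushout f g i j ->
  (forall a x, w a (i a x) = w' a (i a x)) ->
  (forall a x, w a (j a x) = w' a (j a x)) -> dmap_eq w w'.
Proof.
move=> [ij PO] wi wj.
have [w0 [_ [_ w0U]]] := PO Q (dcomp i w) (dcomp j w) (fun a x => congr1 _ (ij a x)).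
move=> a y; rewrite (w0U w) // (w0U w') //.
- by move=> ? ?; rewrite /= wi.
- by move=> ? ?; rewrite /= wj.
Qed.

Lemma dpushout_surjective (A B C P : DSpace D) (f : DMap A B) (g : DMap A C)
    (i : DMap B P) (j : DMap C P) :
  IsDPushout f g i j ->
  forall a y, (exists z, y = i a z) \/ (exists z, y = j a z).
Proof.
move=> PO; pose S a (y : P a) := (exists z, y = i a z) \/ (exists z, y = j a z).
have S_act a b (h : Hom a b) y : S a y -> S b (dact P h y).
  by case=> -[z ->]; [left | right]; exists (dact _ h z); rewrite dmap_nat.
have [w [wi [wj _]]] := PO.2 _ (corestrict S_act (fun a z => or_introl (ex_intro _ z erefl)))
  (corestrict S_act (fun a z => or_intror (ex_intro _ z erefl)))
  (fun a x => eq_exist _ _ (PO.1 a x)).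
have idw : dmap_eq (coarse_id P) (dcomp w (sub_val S_act)).
  by apply: (dpushout_ext PO) => a x /=; [rewrite wi | rewrite wj].
by move=> a y; rewrite [y](idw a y); exact: (proj2_sig (w a y)).
Qed.

Lemma top_colimit_ext (X : DSpace D) (C Y : topologicalType)
    (c : forall a, X a -> C) (h h' : C -> Y) :
  IsTopColimit c -> continuous h -> continuous h' ->
  (forall a x, h (c a x) = h' (c a x)) -> forall z, h z = h' z.
Proof.
move=> [cc [cN univ]] hc hc' hh'.
have [h0 [_ [_ h0U]]] := univ Y (fun a x => h (c a x))
  (fun a x => continuous_comp (cc a x) (hc _)) (fun a b f x => congr1 h (cN a b f x)).
by move=> z; rewrite (h0U h) // (h0U h').
Qed.

Lemma top_colimit_surjective (X : DSpace D) (C : topologicalType)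
    (c : forall a, X a -> C) :
  IsTopColimit c -> forall z, exists a x, z = c a x.
Proof.
move=> cC; have [_ [cN univ]] := cC.
pose T := {z : C | exists a x, z = c a x}.
have [w [_ [wc _]]] := univ (indiscrete T : topologicalType)
  (fun a x => exist _ (c a x) (ex_intro _ a (ex_intro _ x erefl)))
  (fun a => @indiscrete_continuous _ _ _) (fun a b f x => eq_exist _ _ (cN a b f x)).
have idw := @top_colimit_ext X C (indiscrete C) c id (fun z => proj1_sig (w z)) cC
  (@indiscrete_continuous _ _ _) (@indiscrete_continuous _ _ _)
  (fun a x => esym (congr1 _ (wc a x))).
by move=> z; rewrite [z]idw; exact: (proj2_sig (w z)).
Qed.

Lemma orbit_at_diso (X : DSpace D) (C : topologicalType) (c : forall a, X a -> C)
    (x : C) (P O : DSpace D) (p : DMap P X) (q : DMap O X) (r : DMap P O) :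
  IsOrbitAt c x p -> (forall a o, c a (q a o) = x) ->
  (forall a, injective (q a)) -> (forall a y, q a (r a y) = p a y) -> diso P O.
Proof.
move=> [px pU] qx q_inj qr; have [u [uq _]] := pU O q qx.
have [u0 [_ u0U]] := pU P p px.
exists r, u; split => [a y | a o]; last by apply: q_inj; rewrite qr uq.
have ru : dcommutes (dcomp r u) p p by move=> b z /=; rewrite uq qr.
transitivity (u0 a y); first exact: (u0U (dcomp r u) ru a y).
exact: esym (u0U (did P) (fun b z => erefl) a y).
Qed.

End DSpaceConstructions.

Section Ordinals.
Variable L : OrdinalSeg.
Implicit Types l m n : L.

Lemma ole_refl n : ole n n. Proof. by right. Qed.

Lemma ole_trans l m n : ole l m -> ole m n -> ole l n.
Proof.
by move=> [lm|->] [mn|<-]; [left; exact: olt_trans lm mn | left | left | right].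
Qed.

Lemma olt_ole_trans l m n : olt l m -> ole m n -> olt l n.
Proof. by move=> lm [mn|<-] //; exact: olt_trans lm mn. Qed.

Lemma olt_nle m n : olt m n -> ~ ole n m.
Proof. by move=> mn /(olt_ole_trans mn); exact: olt_irrefl. Qed.

Lemma ole_neq_olt m n : ole m n -> m <> n -> olt m n.
Proof. by case. Qed.

Lemma ois_succ_ole m n : ois_succ m n -> ole m n.
Proof. by case; left. Qed.

Lemma ois_succ_le m n k : ois_succ m n -> olt k n -> ole k m.
Proof.
move=> [mn mnS] kn; have [km|[->|mk]] := olt_total k m; [by left | by right |].
by exfalso; apply: (mnS k).
Qed.

Lemma ois_succ_injl m m' n : ois_succ m n -> ois_succ m' n -> m = m'.
Proof.
move=> mn m'n; have [|] := ois_succ_le mn (proj1 m'n) => // m'm.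
by have [|//] := ois_succ_le m'n (proj1 mn) => /(olt_trans m'm) /olt_irrefl.
Qed.

Lemma ois_zero_succ_limit n :
  [\/ ois_zero n, exists m, ois_succ m n | ois_limit n].
Proof.
have [|nz] := pselect (ois_zero n); first by constructor 1.
have [|nS] := pselect (exists m, ois_succ m n); first by constructor 2.
by constructor 3; split => // m mn; apply: nS; exists m.
Qed.

End Ordinals.

Definition in_open_disk (k : nat) (v : Disk k) : Prop := sqnorm (\val v) < 1.

Lemma sqnorm_sphere (k : nat) (s : Sphere k) : sqnorm (\val (sphere_incl s)) = 1.
Proof. by case: s => x /= /set_mem. Qed.

Lemma sphere_incl_boundary (k : nat) (v : Disk k) :
  ~ in_open_disk v -> exists s : Sphere k, sphere_incl s = v.
Proof.
case: v => x /[dup] /set_mem /= x1 xD xN.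
have x_sphere : sphere_set x by apply/eqP; rewrite eq_le x1 leNgt; apply/negP.
by exists (SigSub (mem_set x_sphere)); apply: eq_exist.
Qed.

Section CellComplex.
Variables (D : Cat) (F : DSpace D -> Prop) (X : DCellComplex F).
Local Notation L := (cc_ord X).
Local Notation sp n := (@cc_sp D F X n).
Local Notation iota h := (@cc_map D F X _ _ h).

Lemma iota_comp (l m n : L) (lm : ole l m) (mn : ole m n) (ln : ole l n) a x :
  iota mn a (iota lm a x) = iota ln a x.
Proof. exact: cc_map_comp. Qed.

Lemma iota_id (n : L) (nn : ole n n) a x : iota nn a x = x.
Proof. exact: cc_map_id. Qed.

Lemma iota_irr (m n : L) (mn mn' : ole m n) a x : iota mn a x = iota mn' a x.
Proof. by rewrite (Prop_irrelevance mn mn'). Qed.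

Lemma iota_factor (m n : L) (mn : ole m n) (Y : DSpace D) (w : DMap (sp n) Y)
    (Gm : DMap (sp m) Y) :
  dcommutes (iota mn) w Gm ->
  forall l (lm : ole l m) (ln : ole l n) b z, w b (iota ln b z) = Gm b (iota lm b z).
Proof. by move=> wG l lm ln b z; rewrite -(iota_comp lm mn ln) wG. Qed.

Definition empty_stage_dmap (n : L) (nZ : ois_zero n) (Y : DSpace D) : DMap (sp n) Y.
Proof.
refine (@Build_DMap D (sp n) Y (fun a x => False_rect _ (cc_zero nZ x)) _ _).
- by move=> a x; case: (cc_zero nZ x).
- by move=> a b f x; case: (cc_zero nZ x).
Defined.

Record cell (m n : L) := Cell {
  cell_orbit : DSpace D;
  cell_dim : nat;
  cell_attach : DMap (prodDSpace (Sphere cell_dim) cell_orbit) (sp m);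
  cell_char : DMap (prodDSpace (Disk cell_dim) cell_orbit) (sp n);
  cell_type : F cell_orbit;
  cell_pushout : forall mn : ole m n,
    IsDPushout cell_attach (cell_incl cell_dim cell_orbit) (iota mn) cell_char }.

Definition cell_of (m n : L) (mn : ois_succ m n) : cell m n.
Proof.
have mn' := ois_succ_ole mn; have E := cc_succ mn mn'.
case: (boolp.cid E) => O E1; case: (boolp.cid E1) => k E2.
case: (boolp.cid E2) => phi E3; case: (boolp.cid E3) => j [FO PO].
by apply: (@Cell m n O k phi j FO) => mn''; rewrite (Prop_irrelevance mn'' mn').
Defined.

Definition in_open_cell (n : L) b (y : sp n b) : Prop :=
  exists nu nu1 (hs : ois_succ nu nu1) (h : ole nu1 n)
    (v : Disk (cell_dim (cell_of hs))) (o : cell_orbit (cell_of hs) b),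
    in_open_disk v /\ y = iota h b (cell_char (cell_of hs) b (v, o)).

Lemma in_open_cell_iota (m n : L) (mn : ole m n) b (y : sp m b) :
  in_open_cell y -> in_open_cell (iota mn b y).
Proof.
move=> [nu [nu1 [hs [h [v [o [vD ->]]]]]]].
exists nu, nu1, hs, (ole_trans h mn), v, o; split => //; exact: iota_comp.
Qed.

Lemma cc_limit_ext (n : L) (Y : DSpace D) (w w' : DMap (sp n) Y) :
  ois_limit n ->
  (forall m (mn : olt m n) a x, w a (iota (or_introl mn) a x) = w' a (iota (or_introl mn) a x)) ->
  dmap_eq w w'.
Proof.
move=> nL ww'.
have cocone (m m' : L) (mn : olt m n) (m'n : olt m' n) (mm' : ole m m') :
    dcommutes (iota mm') (dcomp (iota (or_introl m'n)) w) (dcomp (iota (or_introl mn)) w).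
  by move=> a x /=; rewrite (iota_comp _ _ (or_introl mn)).
have [w0 [_ w0U]] := cc_limit nL cocone.
by move=> a y; rewrite (w0U w) ?(w0U w') // => m mn mn' b x /=;
  rewrite (iota_irr mn' (or_introl mn)) ?ww'.
Qed.

Lemma limit_stage_surjective (n : L) : ois_limit n ->
  forall b (y : sp n b), exists m (mn : olt m n) z, y = iota (or_introl mn) b z.
Proof.
move=> nL; pose S a (y : sp n a) := exists m (mn : olt m n) z, y = iota (or_introl mn) a z.
have S_act a b (h : Hom a b) y : S a y -> S b (dact (sp n) h y).
  by case=> m [mn [z ->]]; exists m, mn, (dact _ h z); rewrite dmap_nat.
pose g m (mn : olt m n) := corestrict S_act (m := iota (or_introl mn))
  (fun a z => ex_intro _ m (ex_intro _ mn (ex_intro _ z erefl))).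
have cocone (m m' : L) (mn : olt m n) (m'n : olt m' n) (mm' : ole m m') :
    dcommutes (iota mm') (g m' m'n) (g m mn).
  by move=> a x; apply: eq_exist; rewrite /= (iota_comp _ _ (or_introl mn)).
have [w [wg _]] := cc_limit nL cocone.
have idw : dmap_eq (coarse_id (sp n)) (dcomp w (sub_val S_act)).
  by apply: cc_limit_ext nL _ => m mn a x /=; rewrite (wg m mn).
by move=> a y; rewrite [y](idw a y); exact: (proj2_sig (w a y)).
Qed.

Lemma open_cell_cover (n : L) b (y : sp n b) : in_open_cell y.
Proof.
elim/(well_founded_ind (@olt_wf L)): n b y => n IH b y.
have [nZ|[m mn]|nL] := ois_zero_succ_limit n.
- by case: (cc_zero nZ y).
- pose c := cell_of mn; have mn' := ois_succ_ole mn.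
  have from_m z : in_open_cell (iota mn' b z).
    by apply: in_open_cell_iota; exact: IH (proj1 mn) b z.
  have [[z ->]|[[v o] ->]] := dpushout_surjective (cell_pushout c mn') y.
    exact: from_m.
  have [vD|/sphere_incl_boundary [s <-]] := pselect (in_open_disk v).
    by exists m, n, mn, (ole_refl n), v, o; rewrite iota_id.
  by have /= <- := (cell_pushout c mn').1 b (s, o).
- have [m [mn [z ->]]] := limit_stage_surjective nL y.
  by apply: in_open_cell_iota; exact: IH mn b z.
Qed.

Lemma open_cell_ind (n : L) (Q : forall b, sp n b -> Prop) :
  (forall nu nu1 (hs : ois_succ nu nu1) (h : ole nu1 n) b v o, in_open_disk v ->
     (forall b' z, Q b' (iota (ole_trans (ois_succ_ole hs) h) b' z)) ->
     Q b (iota h b (cell_char (cell_of hs) b (v, o)))) ->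
  forall b y, Q b y.
Proof.
move=> Qcell; suff Qm m (mn : ole m n) b z : Q b (iota mn b z).
  by move=> b y; have := Qm n (ole_refl n) b y; rewrite iota_id.
elim/(well_founded_ind (@olt_wf L)): m mn b z => m IH mn b z.
have [nu [nu1 [hs [h [v [o [vD ->]]]]]]] := open_cell_cover z.
rewrite (iota_comp h mn (ole_trans h mn)); apply: Qcell => // b' z'.
exact: IH (olt_ole_trans (proj1 hs) h) _ b' z'.
Qed.

End CellComplex.

Lemma fst_continuous (A B : topologicalType) : continuous (@fst A B).
Proof. by case=> a b; exact: cvg_fst. Qed.

Lemma snd_continuous (A B : topologicalType) : continuous (@snd A B).
Proof. by case=> a b; exact: cvg_snd. Qed.

Lemma continuous_pair_at (T A B : topologicalType) (f : T -> A) (g : T -> B) x :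
  {for x, continuous f} -> {for x, continuous g} ->
  {for x, continuous (fun t => (f t, g t))}.
Proof. by move=> fc gc; apply: cvg_pair. Qed.

Lemma val_continuous (Z : topologicalType) (A : set Z) :
  continuous (fun x : set_type A => \val x).
Proof. exact: (@initial_continuous _ _ (@set_val _ A)). Qed.

Lemma set_val_continuous_at (S Z : topologicalType) (A : set Z) (f : S -> set_type A) x :
  {for x, continuous (fun y => \val (f y))} -> {for x, continuous f}.
Proof.
move=> fc U [_ /= [[W oW <-]] Wfx] /filterS; apply; apply: fc.
exact: open_nbhs_nbhs.
Qed.

Lemma omap2_focal_continuous (A Z1 Z2 : topologicalType) (g : A -> Z1 -> Z2) :
  continuous (fun q : A * Z1 => g q.1 q.2) ->
  continuous (fun q : A * focal Z1 => omap (g q.1) q.2 : focal Z2).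
Proof.
move=> gc [a [z|]] U /=; last by move/focal_nbhs_None => ->; exact: filterT.
rewrite nbhsE => -[B [oB Bgz] BU]; have [BT|[_ oBS]] := oB.
  by apply: filterS filterT => q _; apply: BU; rewrite BT.
have [[V1 V2] /= [V1a V2z] V12] := gc (a, z) _ (open_nbhs_nbhs (conj oBS Bgz)).
move: V2z; rewrite nbhsE => -[W [oW Wz] WV2].
exists (V1, focal_lift W) => /=.
  by split => //; apply: open_nbhs_nbhs; split; [exact: focal_lift_open | exists z].
case=> a' y [/= V1a' [z' -> Wz']]; apply: BU.
exact: (V12 (a', z') (conj V1a' (WV2 _ Wz'))).
Qed.

Lemma sqnorm_continuous (n : nat) : continuous (@sqnorm n).
Proof.
apply: continuous_big => [|i _]; first exact: (@add_continuous R^o).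
by move=> v; apply: continuous_comp (@exprn_continuous _ 2 _); exact: coord_continuous.
Qed.

Lemma sqnormZ (n : nat) (r : R) (v : 'rV[R]_n) : sqnorm (r *: v) = r ^+ 2 * sqnorm v.
Proof. by rewrite /sqnorm mulr_sumr; apply: eq_bigr => i _; rewrite mxE exprMn. Qed.

Definition normalize (n : nat) (v : 'rV[R]_n) : 'rV[R]_n :=
  (Num.sqrt (sqnorm v))^-1 *: v.

Lemma sqnorm_normalize (n : nat) (v : 'rV[R]_n) :
  0 < sqnorm v -> sqnorm (normalize v) = 1.
Proof.
move=> v0; rewrite sqnormZ exprVn sqr_sqrtr ?ltW //.
by rewrite mulVf ?gt_eqF.
Qed.

Lemma normalize_continuous_at (n : nat) (v : 'rV[R]_n) :
  0 < sqnorm v -> {for v, continuous (@normalize n)}.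
Proof.
move=> v0; apply: (cvgZ _ cvg_id); apply: cvgV; first by rewrite gt_eqF ?sqrtr_gt0.
apply: (continuous_comp (f := @sqnorm n) (g := Num.sqrt)).
  exact: sqnorm_continuous.
exact: sqrt_continuous.
Qed.

Section Sphere.
Variable k : nat.

Definition to_sphere (v : Disk k) (v0 : 0 < sqnorm (\val v)) : Sphere k :=
  SigSub (mem_set (sqnorm_normalize v0 : sphere_set (normalize (\val v)))).

Lemma to_sphere_incl (s : Sphere k) (s0 : 0 < sqnorm (\val (sphere_incl s))) :
  to_sphere s0 = s.
Proof.
case: s s0 => x xS s0; apply: eq_exist => /=.
by rewrite /normalize (set_mem xS) sqrtr1 invr1 scale1r.
Qed.

Definition to_sphere_or (s0 : Sphere k) (v : Disk k) : Sphere k :=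
  if pselect (0 < sqnorm (\val v)) is left v0 then to_sphere v0 else s0.

Lemma to_sphere_orE (s0 : Sphere k) (v : Disk k) (v0 : 0 < sqnorm (\val v)) :
  to_sphere_or s0 v = to_sphere v0.
Proof.
by rewrite /to_sphere_or; case: pselect => // v0'; rewrite (Prop_irrelevance v0' v0).
Qed.

Lemma disk_sqnorm_continuous : continuous (fun v : Disk k => sqnorm (\val v)).
Proof.
move=> v; apply: (continuous_comp (f := fun w : Disk k => \val w) (g := @sqnorm k)).
  exact: val_continuous.
exact: sqnorm_continuous.
Qed.

Lemma sqnorm_gt0_nbhs (v : Disk k) :
  0 < sqnorm (\val v) -> nbhs v [set w : Disk k | 0 < sqnorm (\val w)].
Proof.
move=> v0; apply: (@disk_sqnorm_continuous v [set x : R | 0 < x]).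
by apply: open_nbhs_nbhs; split => //; exact: open_gt.
Qed.

Lemma to_sphere_or_continuous_at (s0 : Sphere k) (v : Disk k) :
  0 < sqnorm (\val v) -> {for v, continuous (to_sphere_or s0)}.
Proof.
move=> v0; apply: set_val_continuous_at.
have eq_near : \forall w \near v, normalize (\val w) = \val (to_sphere_or s0 w).
  by apply: filterS (sqnorm_gt0_nbhs v0) => w w0; rewrite (to_sphere_orE _ w0).
apply: cvg_trans (near_eq_cvg eq_near) _; rewrite /= (to_sphere_orE _ v0).
apply: (continuous_comp (f := fun w : Disk k => \val w) (g := @normalize k)).
  exact: val_continuous.
exact: normalize_continuous_at.
Qed.

End Sphere.

Section Rescale.
Variables (K : nat) (T : topologicalType).

Definition marked : topologicalType := focal ((R * 'rV[R]_K) * T)%type.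

Definition rescale (r : R) : marked -> marked :=
  omap (fun z => ((r * z.1.1, z.1.2), z.2)).

Lemma rescale1 (y : marked) : rescale 1 y = y.
Proof. by case: y => [[[t d] o]|] //=; rewrite mul1r. Qed.

Lemma rescale_continuous : continuous (fun q : (R * marked)%type => rescale q.1 q.2).
Proof.
pose Z := ((R * 'rV[R]_K) * T)%type.
apply: (omap2_focal_continuous (g := fun (r : R) (z : Z) => ((r * z.1.1, z.1.2), z.2))).
have fstC := @fst_continuous; have sndC := @snd_continuous.
have z1C : continuous (fun q : (R * Z)%type => q.2.1).
  by move=> q; apply: (continuous_comp (f := snd)); [exact: sndC | exact: fstC].
move=> q; apply: (continuous_pair_at (f := fun q : (R * Z)%type => (q.1 * q.2.1.1, q.2.1.2))).
  apply: (continuous_pair_at (f := fun q : (R * Z)%type => q.1 * q.2.1.1)).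
    apply: cvgM; first exact: fstC.
    by apply: (continuous_comp (f := fun q : (R * Z)%type => q.2.1)); [exact: z1C | exact: fstC].
  by apply: (continuous_comp (f := fun q : (R * Z)%type => q.2.1)); [exact: z1C | exact: sndC].
by apply: (continuous_comp (f := snd)); [exact: sndC | exact: sndC].
Qed.

End Rescale.

Section RadialExtension.
Variables (K k : nat) (Tc To : topologicalType).
Local Notation Y := (marked K To).
Implicit Type Gs : Sphere k -> Tc -> Y.

Definition radial_ext Gs (p : (Disk k * Tc)%type) : Y :=
  if pselect (0 < sqnorm (\val p.1)) is left v0
  then rescale (Num.sqrt (sqnorm (\val p.1))) (Gs (to_sphere v0) p.2)
  else None.

Lemma radial_extE Gs (v : Disk k) o (v0 : 0 < sqnorm (\val v)) :
  radial_ext Gs (v, o) = rescale (Num.sqrt (sqnorm (\val v))) (Gs (to_sphere v0) o).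
Proof.
by rewrite /radial_ext; case: pselect => //= v0'; rewrite (Prop_irrelevance v0' v0).
Qed.

Lemma radial_ext_center Gs (v : Disk k) o :
  ~ 0 < sqnorm (\val v) -> radial_ext Gs (v, o) = None.
Proof. by rewrite /radial_ext; case: pselect. Qed.

Lemma eq_radial_ext Gs Gs' p :
  (forall s o, Gs s o = Gs' s o) -> radial_ext Gs p = radial_ext Gs' p.
Proof. by move=> GG'; rewrite /radial_ext; case: pselect => // v0; rewrite GG'. Qed.

Lemma radial_ext_None Gs p :
  (forall s o, Gs s o = None) -> radial_ext Gs p = None.
Proof. by move=> G0; rewrite /radial_ext; case: pselect => // v0; rewrite G0. Qed.

Lemma radial_ext_continuous Gs :
  continuous (fun q => Gs q.1 q.2) -> continuous (radial_ext Gs).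
Proof.
move=> Gc [v o]; have [v0|v0] := pselect (0 < sqnorm (\val v)); last first.
  by rewrite /continuous_at radial_ext_center // => A /focal_nbhs_None ->; exact: filterT.
pose M p := rescale (Num.sqrt (sqnorm (\val p.1)))
  (Gs (to_sphere_or (to_sphere v0) p.1) p.2).
have eqM : \forall p \near (v, o), M p = radial_ext Gs p.
  exists ([set w : Disk k | 0 < sqnorm (\val w)], setT) => /=.
    by split; [exact: sqnorm_gt0_nbhs | exact: filterT].
  by case=> w o' [/= w0 _]; rewrite /M /= radial_extE (to_sphere_orE _ w0).
rewrite /continuous_at; have -> : radial_ext Gs (v, o) = M (v, o).
  by rewrite /M /= (to_sphere_orE _ v0) radial_extE.
apply: cvg_trans (near_eq_cvg eqM) _.
apply: (continuous_comp (g := fun q : (R * Y)%type => rescale q.1 q.2)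
  (f := fun p : (Disk k * Tc)%type =>
     (Num.sqrt (sqnorm (\val p.1)), Gs (to_sphere_or (to_sphere v0) p.1) p.2))); last first.
  exact: rescale_continuous.
apply: (continuous_pair_at (f := fun p : (Disk k * Tc)%type => Num.sqrt (sqnorm (\val p.1)))).
  apply: (continuous_comp (f := fst) (g := fun w : Disk k => Num.sqrt (sqnorm (\val w)))).
    exact: fst_continuous.
  apply: (continuous_comp (f := fun w : Disk k => sqnorm (\val w))).
    exact: disk_sqnorm_continuous.
  exact: sqrt_continuous.
apply: (continuous_comp (f := fun p : (Disk k * Tc)%type => (to_sphere_or (to_sphere v0) p.1, p.2))
  (g := fun q => Gs q.1 q.2)); last exact: Gc.
apply: (continuous_pair_at (f := fun p : (Disk k * Tc)%type => to_sphere_or (to_sphere v0) p.1));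
  last exact: snd_continuous.
apply: (continuous_comp (f := fst) (g := to_sphere_or (to_sphere v0))).
  exact: fst_continuous.
exact: to_sphere_or_continuous_at.
Qed.

End RadialExtension.

Section MarkedDSpace.
Variables (D : Cat) (K : nat) (O : DSpace D).

Definition marked_act a b (f : Hom a b) : marked K (O a) -> marked K (O b) :=
  omap (fun z => (z.1, dact O f z.2)).

Lemma marked_act_id a y : marked_act (cid a) y = y.
Proof. by case: y => [[p o]|] //=; rewrite dact_id. Qed.

Lemma marked_act_comp a b c (g : Hom b c) (f : Hom a b) y :
  marked_act (ccomp g f) y = marked_act g (marked_act f y).
Proof. by case: y => [[p o]|] //=; rewrite dact_comp. Qed.

Definition marked_dspace : DSpace D :=
  @Build_DSpace D (fun a => marked K (O a)) marked_act
    (fun a b f => omap_focal_continuous (pair_map_cont (dact_cont O f)))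
    marked_act_id marked_act_comp.

Lemma marked_act_rescale a b (f : Hom a b) r y :
  marked_act f (rescale r y) = rescale r (marked_act f y).
Proof. by case: y => [[p o]|]. Qed.

Definition open_disk_marker a (p : (Disk K * O a)%type) : marked K (O a) :=
  if pselect (in_open_disk p.1) is left _ then Some ((1, \val p.1), p.2) else None.

Lemma open_disk_marker_continuous a : continuous (@open_disk_marker a).
Proof.
apply: continuous_into_focal => V oV.
have -> : @open_disk_marker a @^-1` focal_lift V =
    [set p | in_open_disk p.1] `&` (fun p => ((1, \val p.1), p.2)) @^-1` V.
  apply/seteqP; split => -[v o]; rewrite /open_disk_marker /=; case: pselect => //.
  - by move=> vD [_ [<-]].
  - by move=> _ [? []].
  - by move=> _ [_ Vp]; exists ((1, \val v), o).
  - by move=> nv [/nv].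
apply: openI.
  apply: (@open_comp _ _ (fun p : (Disk K * O a)%type => sqnorm (\val p.1)) [set x | x < 1]).
    move=> p _; apply: (continuous_comp (f := fst) (g := fun v : Disk K => sqnorm (\val v))).
      exact: fst_continuous.
    exact: disk_sqnorm_continuous.
  exact: open_lt.
have markC : continuous (fun p : (Disk K * O a)%type => (((1 : R), \val p.1), p.2)).
  move=> p; apply: (continuous_pair_at (f := fun p : (Disk K * O a)%type => ((1 : R), \val p.1))).
    apply: continuous_pair_at; first exact: cst_continuous.
    apply: (continuous_comp (f := fst) (g := fun v : Disk K => \val v)).
      exact: fst_continuous.
    exact: val_continuous.
  exact: snd_continuous.
by move/continuousP: markC; apply.
Qed.

Definition open_disk_marker_dmap : DMap (prodDSpace (Disk K) O) marked_dspace.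
Proof.
refine (@Build_DMap D (prodDSpace (Disk K) O) marked_dspace (@open_disk_marker) (fun a => @open_disk_marker_continuous a) _).
by move=> a b f [v o]; rewrite /open_disk_marker /=; case: pselect.
Defined.

End MarkedDSpace.

Section Marker.
Variables (D : Cat) (F : DSpace D -> Prop) (X : DCellComplex F).
Local Notation L := (cc_ord X).
Local Notation sp n := (@cc_sp D F X n).
Local Notation iota h := (@cc_map D F X _ _ h).
Variables (mu mu1 : L) (hsmu : ois_succ mu mu1).
Local Notation c0 := (cell_of hsmu).
Local Notation K := (cell_dim c0).
Local Notation O0 := (cell_orbit c0).
Local Notation Y := (marked_dspace K O0).

(* The interior of [c0] is marked with depth 1; every other cell carries the
   radial extension of its boundary values, hence depth < 1. *)
Definition is_marker (n : L) (G : DMap (sp n) Y) : Prop :=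
  (forall (h : ole mu1 n) b v o,
     G b (iota h b (cell_char c0 b (v, o))) = open_disk_marker (v, o)) /\
  (forall nu nu1 (hs : ois_succ nu nu1) (h : ole nu1 n), nu1 <> mu1 -> forall b v o,
     G b (iota h b (cell_char (cell_of hs) b (v, o))) =
     radial_ext (fun s o' => G b (iota (ole_trans (ois_succ_ole hs) h) b
                                  (cell_attach (cell_of hs) b (s, o')))) (v, o)).

Lemma marker_restrict (m n : L) (mn : ole m n) (G : DMap (sp n) Y) :
  is_marker G -> is_marker (dcomp (iota mn) G).
Proof.
move=> [GB GG]; split => [h b v o | nu nu1 hs h ne b v o] /=.
  by rewrite (iota_comp h mn (ole_trans h mn)) GB.
rewrite (iota_comp h mn (ole_trans h mn)) GG //.
by apply: eq_radial_ext => s o' /=;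
  rewrite (iota_comp _ mn (ole_trans (ois_succ_ole hs) (ole_trans h mn))).
Qed.

Lemma marker_unique (n : L) (G G' : DMap (sp n) Y) :
  is_marker G -> is_marker G' -> dmap_eq G G'.
Proof.
move=> [GB GG] [GB' GG']; apply: open_cell_ind => nu nu1 hs h b v o _ IH.
have [e|ne] := pselect (nu1 = mu1); last first.
  by rewrite GG // GG' //; apply: eq_radial_ext => s o'; exact: IH.
subst nu1; have ? := ois_succ_injl hs hsmu; subst nu.
by have ? := Prop_irrelevance hs hsmu; subst hs; rewrite GB GB'.
Qed.

Lemma marker_None_before (n : L) (G : DMap (sp n) Y) :
  is_marker G -> ~ ole mu1 n -> forall b y, G b y = None.
Proof.
move=> [_ GG] nle; apply: open_cell_ind => nu nu1 hs h b v o _ IH.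
have ne : nu1 <> mu1 by move=> e; subst nu1; exact: nle h.
by rewrite GG //; apply: radial_ext_None => s o'; exact: IH.
Qed.

Lemma marker_zero (n : L) (nZ : ois_zero n) : is_marker (empty_stage_dmap nZ Y).
Proof.
by split => [h b v o | nu nu1 hs h _ b v o];
  case: (cc_zero nZ (iota h b (cell_char _ b (v, o)))).
Qed.

Lemma marker_below (m n : L) (mn : ole m n) (w : DMap (sp n) Y) (Gm : DMap (sp m) Y) :
  is_marker Gm -> dcommutes (iota mn) w Gm ->
  (forall (h : ole mu1 n), ole mu1 m -> forall b v o,
     w b (iota h b (cell_char c0 b (v, o))) = open_disk_marker (v, o)) /\
  (forall nu nu1 (hs : ois_succ nu nu1) (h : ole nu1 n), nu1 <> mu1 -> ole nu1 m ->
   forall b v o,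
     w b (iota h b (cell_char (cell_of hs) b (v, o))) =
     radial_ext (fun s o' => w b (iota (ole_trans (ois_succ_ole hs) h) b
                                  (cell_attach (cell_of hs) b (s, o')))) (v, o)).
Proof.
move=> [GB GG] wG; split => [h h' b v o | nu nu1 hs h ne h' b v o].
  by rewrite (iota_factor wG h') GB.
rewrite (iota_factor wG h') GG //.
by apply: eq_radial_ext => s o'; rewrite (iota_factor wG (ole_trans (ois_succ_ole hs) h')).
Qed.

Definition radial_ext_dmap (m n : L) (c : cell m n) (Gm : DMap (sp m) Y) :
  DMap (prodDSpace (Disk (cell_dim c)) (cell_orbit c)) Y.
Proof.
refine (@Build_DMap D (prodDSpace (Disk (cell_dim c)) (cell_orbit c)) Y
  (fun a => radial_ext (fun s o => Gm a (cell_attach c a (s, o)))) _ _).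
- move=> a; apply: radial_ext_continuous.
  have -> : (fun q => Gm a (cell_attach c a (q.1, q.2))) = Gm a \o cell_attach c a.
    by apply/funext => -[].
  by move=> q; apply: continuous_comp; [exact: (dmap_cont (cell_attach c)) | exact: (dmap_cont Gm)].
- move=> a b f [v o]; rewrite /radial_ext /=.
  case: pselect => // v0; rewrite marked_act_rescale.
  by have /= -> := dmap_nat (cell_attach c) f (to_sphere v0, o); rewrite dmap_nat.
Defined.

Lemma marker_succ (m n : L) (hs : ois_succ m n) (Gm : DMap (sp m) Y) :
  is_marker Gm -> exists G : DMap (sp n) Y, is_marker G.
Proof.
move=> Gmk; have mn := ois_succ_ole hs.
have below nu1 (h : ole nu1 n) : nu1 <> n -> ole nu1 m.
  by move=> ne; exact: ois_succ_le hs (ole_neq_olt h ne).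
have [e|ne] := pselect (n = mu1).
- subst n; have ? := ois_succ_injl hs hsmu; subst m.
  have compat a x : Gm a (cell_attach c0 a x) =
      open_disk_marker_dmap K O0 a (cell_incl K O0 a x).
    case: x => s o; rewrite (marker_None_before Gmk (olt_nle (proj1 hsmu))) /=.
    by rewrite /open_disk_marker /in_open_disk; case: pselect; rewrite ?sqnorm_sphere ?ltxx.
  have [w [wG [wC _]]] := (cell_pushout c0 mn).2 Y Gm _ compat.
  have [_ wB] := marker_below Gmk wG.
  exists w; split => [h b v o | nu nu1 hs' h ne b v o]; first by rewrite iota_id wC.
  by apply: wB => //; apply: below.
- pose c := cell_of hs.
  have compat a x : Gm a (cell_attach c a x) =
      radial_ext_dmap c Gm a (cell_incl (cell_dim c) (cell_orbit c) a x).
    case: x => s o; have s0 : 0 < sqnorm (\val (sphere_incl s)) by rewrite sqnorm_sphere.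
    by rewrite /= (radial_extE _ _ s0) to_sphere_incl sqnorm_sphere sqrtr1 rescale1.
  have [w [wG [wC _]]] := (cell_pushout c mn).2 Y Gm _ compat.
  have [wA wB] := marker_below Gmk wG.
  exists w; split => [h b v o | nu nu1 hs' h ne' b v o].
    by apply: wA => //; apply: below => // e; exact: ne (esym e).
  have [e|ne''] := pselect (nu1 = n); last by apply: wB => //; apply: below.
  subst nu1; have ? := ois_succ_injl hs' hs; subst nu.
  have ? := Prop_irrelevance hs' hs; subst hs'; rewrite iota_id wC /=.
  by apply: eq_radial_ext => s o'; rewrite (iota_factor wG (ole_refl m)) iota_id.
Qed.

Lemma marker_limit (n : L) : ois_limit n ->
  (forall m, olt m n -> exists G : DMap (sp m) Y, is_marker G) ->
  exists G : DMap (sp n) Y, is_marker G.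
Proof.
move=> nL IH; pose g m (mn : olt m n) := proj1_sig (boolp.cid (IH m mn)).
have gM m (mn : olt m n) : is_marker (g m mn) := proj2_sig (boolp.cid (IH m mn)).
have cocone (m m' : L) (mn : olt m n) (m'n : olt m' n) (mm' : ole m m') :
    dcommutes (iota mm') (g m' m'n) (g m mn).
  exact: marker_unique (marker_restrict mm' (gM m' m'n)) (gM m mn).
have [w [wg _]] := cc_limit nL cocone.
have lt_n nu nu1 (hs : ois_succ nu nu1) (h : ole nu1 n) : olt nu1 n.
  by case: h => // e; subst nu1; case: (nL.2 nu hs).
exists w; split => [h b v o | nu nu1 hs h ne b v o].
  have mun := lt_n _ _ hsmu h.
  by apply: (marker_below (gM _ mun) (wg _ mun h)).1; exact: ole_refl.
have nun := lt_n _ _ hs h.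
by apply: (marker_below (gM _ nun) (wg _ nun h)).2 => //; exact: ole_refl.
Qed.

Lemma marker_exists (n : L) : exists G : DMap (sp n) Y, is_marker G.
Proof.
elim/(well_founded_ind (@olt_wf L)): n => n IH.
have [nZ|[m mn]|nL] := ois_zero_succ_limit n.
- by exists (empty_stage_dmap nZ Y); exact: marker_zero.
- by have [Gm /(marker_succ mn)] := IH m (proj1 mn).
- exact: marker_limit nL IH.
Qed.

Lemma marker_depth (n : L) (G : DMap (sp n) Y) : is_marker G ->
  forall b y t d o, G b y = Some ((t, d), o) ->
  [/\ 0 < t, t <= 1 & t = 1 -> exists (h : ole mu1 n) (v : Disk K),
      [/\ \val v = d, in_open_disk v & y = iota h b (cell_char c0 b (v, o))]].
Proof.
move=> [GB GG]; apply: open_cell_ind => nu nu1 hs h b v o vD IH t d o'.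
have [e|ne] := pselect (nu1 = mu1).
  subst nu1; have ? := ois_succ_injl hs hsmu; subst nu.
  have ? := Prop_irrelevance hs hsmu; subst hs; rewrite GB /open_disk_marker /=.
  by case: pselect => // _ [<- <- <-]; split => // _; exists h, v; split.
rewrite GG // /radial_ext /=; case: pselect => // v0.
case E : (G b _) => [[[t1 d1] o1]|] //= [<- _ _].
have [t1_gt0 t1_le1 _] := IH b _ t1 d1 o1 E.
have r_gt0 : 0 < Num.sqrt (sqnorm (\val v)) by rewrite sqrtr_gt0.
have r_lt1 : Num.sqrt (sqnorm (\val v)) < 1 by rewrite -sqrtr1 ltr_sqrt.
have rt1_lt1 : Num.sqrt (sqnorm (\val v)) * t1 < 1.
  exact: le_lt_trans (ler_piMr (ltW r_gt0) t1_le1) r_lt1.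
split; [exact: mulr_gt0 | exact: ltW | by move=> e1; move: rt1_lt1; rewrite e1 ltxx].
Qed.

End Marker.

Section CellPoints.
Variables (D : Cat) (F : DSpace D -> Prop) (X : DCellComplex F).
Local Notation L := (cc_ord X).
Local Notation sp n := (@cc_sp D F X n).
Local Notation iota h := (@cc_map D F X _ _ h).
Variables (mu mu1 n : L) (hsmu : ois_succ mu mu1) (h : ole mu1 n).
Local Notation c0 := (cell_of hsmu).
Local Notation K := (cell_dim c0).
Local Notation O0 := (cell_orbit c0).
Variables (v0 : Disk K) (v0D : in_open_disk v0).

Definition cell_point : DMap O0 (sp n).
Proof.
refine (@Build_DMap D O0 (sp n) (fun b o => iota h b (cell_char c0 b (v0, o))) _ _).
- move=> b o; apply: (continuous_comp (f := fun o => cell_char c0 b (v0, o))); last first.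
    exact: dmap_cont.
  apply: (continuous_comp (f := fun o : O0 b => (v0, o))); last exact: dmap_cont.
  by apply: continuous_pair_at; [exact: cst_continuous | exact: cvg_id].
- by move=> a b f o; rewrite -dmap_nat -(dmap_nat (cell_char c0) f (v0, o)).
Defined.

Lemma marker_cell_point (G : DMap (sp n) (marked_dspace K O0)) :
  is_marker G -> forall b o, G b (cell_point b o) = Some ((1, \val v0), o).
Proof.
by move=> [GB _] b o; rewrite /= GB /open_disk_marker /=; case: pselect.
Qed.

Lemma cell_point_inj : forall b, injective (cell_point b).
Proof.
have [G GM] := marker_exists hsmu n.
by move=> b o o' /(congr1 (G b)); rewrite !(marker_cell_point GM) => -[].
Qed.

Lemma cell_point_fiber (C : topologicalType) (c : forall a, sp n a -> C) :
  IsTopColimit c -> forall a o b z, c b z = c a (cell_point a o) ->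
  exists o', z = cell_point b o'.
Proof.
move=> [_ [_ univ]] a o b z zo; have [G GM] := marker_exists hsmu n.
(* Forgetting the orbit coordinate makes [G] invariant under the D-action, so
   it factors through the colimit. *)
pose T := indiscrete (option (R * 'rV[R]_K)).
pose g b (z : sp n b) : T := omap fst (G b z).
have gN a' b' (f : Hom a' b') z' : g b' (dact (sp n) f z') = g a' z'.
  by rewrite /g dmap_nat; case: (G a' z') => [[]|].
have [gc [_ [gcE _]]] := univ T g (fun b => @indiscrete_continuous _ _ _) gN.
have := congr1 gc zo; rewrite !gcE /g (marker_cell_point GM) /=.
case E : (G b z) => [[[t d] o']|] //= [t1 dv0]; subst t d; exists o'.
have [_ _ /(_ erefl) [h' [v [vv0 _ ->]]]] := marker_depth GM E.
by rewrite (val_inj vv0) (iota_irr h' h).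
Qed.

Lemma cell_point_orbit (C : topologicalType) (c : forall a, sp n a -> C) :
  DOrbit O0 -> IsTopColimit c ->
  forall a o b o', c b (cell_point b o') = c a (cell_point a o).
Proof.
move=> [C' [c' [[_ [_ univ']] [pt c'pt]]]] [cC [cN _]] a o b o'.
have kC b' : continuous (fun o => c b' (cell_point b' o)).
  by move=> o''; apply: continuous_comp; [exact: dmap_cont | exact: cC].
have kN a' b' (f : Hom a' b') o'' :
    c b' (cell_point b' (dact O0 f o'')) = c a' (cell_point a' o'').
  by rewrite dmap_nat cN.
have [k [_ [kE _]]] := univ' C _ kC kN.
by rewrite -kE (c'pt (c' b o')) -(c'pt (c' a o)) kE.
Qed.

Lemma cell_point_factor (C : topologicalType) (c : forall a, sp n a -> C)
    (P : DSpace D) (p : DMap P (sp n)) a0 o0 :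
  IsTopColimit c -> (forall a y, c a (p a y) = c a0 (cell_point a0 o0)) ->
  exists r : DMap P O0, forall a y, cell_point a (r a y) = p a y.
Proof.
move=> cC px; have [G GM] := marker_exists hsmu n.
pose r a y := proj1_sig (boolp.cid (cell_point_fiber cC (px a y))).
have rp a y : cell_point a (r a y) = p a y.
  by rewrite /r; case: boolp.cid.
have rN a b (f : Hom a b) y : r b (dact P f y) = dact O0 f (r a y).
  by apply: (@cell_point_inj b); rewrite dmap_nat !rp dmap_nat.
have rC b : continuous (r b).
  have GpC : continuous (fun y => Some (((1 : R), \val v0), r b y) : marked K (O0 b)).
    move=> y; have -> : (fun y => Some ((1, \val v0), r b y) : marked K (O0 b)) =
        G b \o p b by apply/funext => y'; rewrite /= -rp (marker_cell_point GM).
    by apply: continuous_comp; [exact: (dmap_cont p) | exact: (dmap_cont G)].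
  move=> y; apply: (continuous_comp (f := fun y => (((1 : R), \val v0), r b y)) (g := snd)).
    by move/(_ y): (focal_Some_continuous_inv GpC).
  exact: snd_continuous.
by exists (@Build_DMap D P O0 r rC rN).
Qed.

End CellPoints.

Theorem proposition6p6 (D : Cat) (F : DSpace D -> Prop)
  (HF : forall O, F O -> DOrbit O) (X : DCellComplex F) :
  DSpace_of_type F (cc_space X).
Proof.
move=> C c cC x P p px.
have [a0 [y0 ?]] := top_colimit_surjective cC x; subst x.
have [mu [mu1 [hs [h [v0 [o0 [v0D ?]]]]]]] := open_cell_cover y0; subst y0.
have Ox := cell_point_orbit h v0 (HF _ (cell_type (cell_of hs))) cC o0.
have [r rp] := cell_point_factor (h := h) v0D cC px.1.
exists (cell_orbit (cell_of hs)); split; first exact: cell_type.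
exact: orbit_at_diso px Ox (cell_point_inj v0D) rp.
Qed.
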